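(* Let $r>0$ and let $n\geq 2$ be an integer. Consider the one-parameter family of scalar ODEs $$\frac{dx}{dt}=f(x,a)=a\frac{x^n}{1+x^n}-x+r,\qquad x\in[0,\infty),$$ with bifurcation parameter $a>0$. Let $a_{c,1}<a_{c,2}$ be the values of $a$ at which the line $x\mapsto x-r$ is tangent to the curve $x\mapsto a\frac{x^n}{1+x^n}$, i.e. for which the system $f(x,a)=0$, $\frac{\partial f}{\partial x}(x,a)=0$ has a solution $x>0$. For $a=a_{c,j}$ the system has exactly two equilibria, denoted $0<\bar x_1(a_{c,j})<\bar x_2(a_{c,j})$. Suppose that $a_{c,j}\neq \frac{4n}{n^2-1}\left(\frac{n-1}{n+1}\right)^{1/n}$ for $j=1,2$. Then the system undergoes fold (saddle-node) bifurcations at the critical points $(\bar x_2(a_{c,1}),a_{c,1})$ and $(\bar x_1(a_{c,2}),a_{c,2})$; consequently, near each critical point the system can be mapped to the normal form $\frac{dz}{dt}=\beta\pm z^2$, where $z=x-\bar x_i$ (with $\bar x_i$ the critical equilibrium) and $\beta\in\mathbb{R}$ is proportional to $a-a_{c,j}$.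
   Context: A fold bifurcation at $(x^*,a^* )$ of a scalar system $\dot x=f(x,a)$ is characterised by $f(x^*,a^* )=0$, $f_x(x^*,a^* )=0$ together with the nondegeneracy conditions $f_a(x^*,a^* )\neq 0$ and $f_{xx}(x^*,a^* )\neq 0$, under which the system is locally topologically equivalent to the normal form $\dot z=\beta\pm z^2$. *)

From Stdlib Require Import Reals.
From Coquelicot Require Import Coquelicot.
Open Scope R_scope.

Definition hill_f (r : R) (n : nat) (x a : R) : R :=
  a * (x ^ n / (1 + x ^ n)) - x + r.

Definition fold_bifurcation (f : R -> R -> R) (xs as_ : R) : Prop :=
  f xs as_ = 0 /\
  is_derive (fun y => f y as_) xs 0 /\
  (exists fa, is_derive (fun b => f xs b) as_ fa /\ fa <> 0) /\
  (exists fxx, is_derive (fun y => Derive (fun z => f z as_) y) xs fxx /\ fxx <> 0).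

Definition tangency (f : R -> R -> R) (a : R) : Prop :=
  exists x, 0 < x /\ f x a = 0 /\ is_derive (fun y => f y a) x 0.

Definition exactly_two_equilibria (f : R -> R -> R) (a x1 x2 : R) : Prop :=
  0 < x1 < x2 /\ forall x, 0 <= x -> (f x a = 0 <-> x = x1 \/ x = x2).

Definition exceptional_a (n : nat) : R :=
  4 * INR n / (INR n ^ 2 - 1) * Rpower ((INR n - 1) / (INR n + 1)) (/ INR n).

From Stdlib Require Import Reals Lra Lia.
From Coquelicot Require Import Coquelicot.
Open Scope R_scope.

(* Write g(x) = x^n/(1+x^n), so that f = a g - x + r, f_x = a g' - 1, f_xx = a g''
   and f_a = g > 0.  As g'' has the sign of (n-1) - (n+1) x^n, g' is unimodal with
   its maximum at the inflection point p = ((n-1)/(n+1))^(1/n), and a g'(p) = 1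
   exactly when a is the exceptional value.  So at a tangency point t <> p we get
   f_xx <> 0, and it only remains to see which equilibrium is the tangency point.
   A tangency at the lower equilibrium lies left of p and one at the upper
   equilibrium right of p: otherwise f would be nondecreasing between p and t and
   create a third zero.  Eliminating a from a g'(t) = 1 and f(t,a) = 0 gives
   r = t - t(1+t^n)/n, strictly monotone on each side of p, so the tangency points
   of a_c1 and a_c2 lie on different sides of p.  Finally a lower tangency at a_c1
   with an upper one at a_c2 is impossible, since f(., a_c2) is positive at the
   upper equilibrium of a_c1 and nondecreasing from there to its own upper
   equilibrium. *)

Lemma pow_pred (x : R) (k : nat) : (1 <= k)%nat -> x ^ k = x * x ^ (k - 1).
Proof. intros hk. destruct k as [|k]; [lia|]. simpl. rewrite Nat.sub_0_r. reflexivity. Qed.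

Lemma pow_lt_compat_l (x y : R) (k : nat) : 0 <= x < y -> (1 <= k)%nat -> x ^ k < y ^ k.
Proof.
  intros [hx hxy] hk. rewrite (pow_pred x k hk), (pow_pred y k hk).
  assert (x ^ (k - 1) <= y ^ (k - 1)) by (apply pow_incr; lra).
  assert (0 < y ^ (k - 1)) by (apply pow_lt; lra).
  nra.
Qed.

Lemma derive_pos_incr (F F' : R -> R) (u v : R) : u < v ->
  (forall c, u <= c <= v -> is_derive F c (F' c)) ->
  (forall c, u < c < v -> 0 < F' c) -> F u < F v.
Proof.
  intros huv hd hpos.
  destruct (MVT_cor2 F F' u v huv) as [c [hc hcuv]].
  - intros c hc. apply is_derive_Reals. auto.
  - specialize (hpos c hcuv). nra.
Qed.

Lemma derive_neg_decr (F F' : R -> R) (u v : R) : u < v ->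
  (forall c, u <= c <= v -> is_derive F c (F' c)) ->
  (forall c, u < c < v -> F' c < 0) -> F v < F u.
Proof.
  intros huv hd hneg.
  destruct (MVT_cor2 F F' u v huv) as [c [hc hcuv]].
  - intros c hc. apply is_derive_Reals. auto.
  - specialize (hneg c hcuv). nra.
Qed.

Lemma derive_nonneg_le (F F' : R -> R) (u v : R) : u <= v ->
  (forall c, u <= c <= v -> is_derive F c (F' c)) ->
  (forall c, u < c < v -> 0 <= F' c) -> F u <= F v.
Proof.
  intros huv hd hnn. destruct (Req_dec u v) as [->|huv']; [lra|].
  destruct (MVT_cor2 F F' u v) as [c [hc hcuv]]; [lra| |].
  - intros c hc. apply is_derive_Reals. auto.
  - specialize (hnn c hcuv). nra.
Qed.

Section HillFunction.

Variable n : nat.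
Hypothesis n_ge2 : (2 <= n)%nat.

Definition hill (x : R) : R := x ^ n / (1 + x ^ n).

Definition hill' (x : R) : R := INR n * x ^ (n - 1) / (1 + x ^ n) ^ 2.

Definition inflection_factor (x : R) : R := INR n - 1 - (INR n + 1) * x ^ n.

Definition hill'' (x : R) : R :=
  INR n * x ^ (n - 2) * inflection_factor x / (1 + x ^ n) ^ 3.

Definition inflection_point : R := Rpower ((INR n - 1) / (INR n + 1)) (/ INR n).

(* When [a * hill' x = 1], the line [y = x - r] is tangent to [y = a * hill y]
   at [x] exactly for [r = tangent_offset x]. *)
Definition tangent_offset (x : R) : R := x - x * (1 + x ^ n) / INR n.

Lemma INR_n_ge2 : 2 <= INR n.
Proof. apply (le_INR 2 n) in n_ge2. simpl in n_ge2. lra. Qed.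

Lemma pow_n_pred (x : R) : x ^ n = x * x ^ (n - 1).
Proof. apply pow_pred. lia. Qed.

Lemma pow_n_pred2 (x : R) : x ^ (n - 1) = x * x ^ (n - 2).
Proof. rewrite (pow_pred x (n - 1)) by lia. do 2 f_equal. lia. Qed.

Lemma is_derive_hill' (x : R) : 0 < x -> is_derive hill' x (hill'' x).
Proof.
  intros hx. assert (0 < x ^ (n - 2)) by (apply pow_lt; lra).
  unfold hill', hill'', inflection_factor. auto_derive.
  - rewrite pow_n_pred, pow_n_pred2. nra.
  - rewrite minus_INR by lia.
    replace (Init.Nat.pred (n - 1)) with (n - 2)%nat by lia.
    replace (Init.Nat.pred n) with (n - 1)%nat by lia.
    rewrite !pow_n_pred, !pow_n_pred2. simpl. field. nra.
Qed.

Lemma is_derive_tangent_offset (x : R) :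
  is_derive tangent_offset x (inflection_factor x / INR n).
Proof.
  pose proof INR_n_ge2.
  unfold tangent_offset, inflection_factor. auto_derive; [lra|].
  rewrite <- Nat.sub_1_r, pow_n_pred. field. lra.
Qed.

Lemma hill_eq (x : R) : 0 <= x -> hill x = hill' x * (x * (1 + x ^ n) / INR n).
Proof.
  intros hx. pose proof INR_n_ge2. assert (0 <= x ^ n) by (apply pow_le; lra).
  unfold hill, hill'. rewrite pow_n_pred in *. field. lra.
Qed.

Lemma hill_pos (x : R) : 0 < x -> 0 < hill x.
Proof.
  intros hx. assert (0 < x ^ n) by (apply pow_lt; lra).
  apply Rdiv_lt_0_compat; lra.
Qed.

Lemma hill_lt_1 (x : R) : 0 <= x -> hill x < 1.
Proof.
  intros hx. assert (0 <= x ^ n) by (apply pow_le; lra).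
  unfold hill. apply Rmult_lt_reg_r with (1 + x ^ n); [lra|].
  unfold Rdiv. rewrite Rmult_assoc, Rinv_l by lra. lra.
Qed.

Lemma hill'_pos (x : R) : 0 < x -> 0 < hill' x.
Proof.
  intros hx. pose proof INR_n_ge2. assert (0 < x ^ n) by (apply pow_lt; lra).
  assert (0 < x ^ (n - 1)) by (apply pow_lt; lra).
  apply Rdiv_lt_0_compat; [nra|apply pow_lt; lra].
Qed.

Lemma inflection_point_pos : 0 < inflection_point.
Proof. apply exp_pos. Qed.

Lemma inflection_point_pow : inflection_point ^ n = (INR n - 1) / (INR n + 1).
Proof.
  pose proof INR_n_ge2.
  rewrite <- Rpower_pow by apply inflection_point_pos.
  unfold inflection_point. rewrite Rpower_mult, Rinv_l by lra.
  apply Rpower_1, Rdiv_lt_0_compat; lra.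
Qed.

Lemma inflection_factor_pos (x : R) : 0 <= x < inflection_point -> 0 < inflection_factor x.
Proof.
  intros hx. pose proof INR_n_ge2.
  pose proof (pow_lt_compat_l _ _ n hx ltac:(lia)) as hpow.
  rewrite inflection_point_pow in hpow. unfold inflection_factor.
  apply (Rmult_lt_compat_l (INR n + 1)) in hpow; [|lra].
  replace ((INR n + 1) * ((INR n - 1) / (INR n + 1))) with (INR n - 1) in hpow
    by (field; lra).
  lra.
Qed.

Lemma inflection_factor_neg (x : R) : inflection_point < x -> inflection_factor x < 0.
Proof.
  intros hx. pose proof INR_n_ge2. pose proof inflection_point_pos.
  pose proof (pow_lt_compat_l inflection_point x n ltac:(lra) ltac:(lia)) as hpow.
  rewrite inflection_point_pow in hpow. unfold inflection_factor.
  apply (Rmult_lt_compat_l (INR n + 1)) in hpow; [|lra].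
  replace ((INR n + 1) * ((INR n - 1) / (INR n + 1))) with (INR n - 1) in hpow
    by (field; lra).
  lra.
Qed.

Lemma hill''_pos (x : R) : 0 < x < inflection_point -> 0 < hill'' x.
Proof.
  intros hx. pose proof INR_n_ge2. pose proof (inflection_factor_pos x ltac:(lra)).
  assert (0 < x ^ (n - 2)) by (apply pow_lt; lra).
  assert (0 < x ^ n) by (apply pow_lt; lra).
  apply Rdiv_lt_0_compat; [|apply pow_lt; lra].
  repeat apply Rmult_lt_0_compat; lra.
Qed.

Lemma hill''_neg (x : R) : inflection_point < x -> hill'' x < 0.
Proof.
  intros hx. pose proof INR_n_ge2. pose proof inflection_point_pos.
  pose proof (inflection_factor_neg x hx).
  assert (0 < x ^ (n - 2)) by (apply pow_lt; lra).
  assert (0 < x ^ n) by (apply pow_lt; lra).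
  assert (0 < (1 + x ^ n) ^ 3) by (apply pow_lt; lra).
  unfold hill''. apply Ropp_lt_cancel. rewrite Ropp_0, <- Rdiv_opp_l.
  apply Rdiv_lt_0_compat; [|lra].
  replace (- (INR n * x ^ (n - 2) * inflection_factor x))
    with (INR n * x ^ (n - 2) * - inflection_factor x) by ring.
  repeat apply Rmult_lt_0_compat; lra.
Qed.

Lemma hill'_incr (x y : R) : 0 < x < y -> y <= inflection_point -> hill' x < hill' y.
Proof.
  intros hxy hy. apply (derive_pos_incr _ hill''); [lra| |].
  - intros c hc. apply is_derive_hill'. lra.
  - intros c hc. apply hill''_pos. lra.
Qed.

Lemma hill'_decr (x y : R) : inflection_point <= x < y -> hill' y < hill' x.
Proof.
  intros hxy. pose proof inflection_point_pos.
  apply (derive_neg_decr _ hill''); [lra| |].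
  - intros c hc. apply is_derive_hill'. lra.
  - intros c hc. apply hill''_neg. lra.
Qed.

Lemma tangent_offset_incr (x y : R) :
  0 <= x < y -> y <= inflection_point -> tangent_offset x < tangent_offset y.
Proof.
  intros hxy hy. pose proof INR_n_ge2.
  apply (derive_pos_incr _ (fun c => inflection_factor c / INR n)); [lra| |].
  - intros c _. apply is_derive_tangent_offset.
  - intros c hc. apply Rdiv_lt_0_compat; [apply inflection_factor_pos|]; lra.
Qed.

Lemma tangent_offset_decr (x y : R) :
  inflection_point <= x < y -> tangent_offset y < tangent_offset x.
Proof.
  intros hxy. pose proof INR_n_ge2.
  apply (derive_neg_decr _ (fun c => inflection_factor c / INR n)); [lra| |].
  - intros c _. apply is_derive_tangent_offset.
  - intros c hc. pose proof (inflection_factor_neg c ltac:(lra)).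
    unfold Rdiv. assert (0 < / INR n) by (apply Rinv_0_lt_compat; lra). nra.
Qed.

Lemma exceptional_a_hill' : exceptional_a n * hill' inflection_point = 1.
Proof.
  pose proof INR_n_ge2. pose proof inflection_point_pos.
  pose proof inflection_point_pow as hq.
  unfold exceptional_a, hill'. fold inflection_point.
  rewrite hq. rewrite pow_n_pred in hq.
  set (p := inflection_point) in *. set (N := INR n) in *.
  replace (N * p ^ (n - 1)) with (N * (p * p ^ (n - 1)) / p) by (field; lra).
  rewrite hq. field. repeat split; nra.
Qed.

End HillFunction.

Section Equilibria.

Variables (n : nat) (r a : R).
Hypotheses (n_ge2 : (2 <= n)%nat) (r_pos : 0 < r) (a_pos : 0 < a).

Local Notation f x := (hill_f r n x a).

Lemma is_derive_hill_f (x : R) : 0 <= x -> is_derive (fun y => f y) x (a * hill' n x - 1).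
Proof.
  intros hx. assert (0 <= x ^ n) by (apply pow_le; lra).
  unfold hill_f, hill'. auto_derive; [lra|].
  rewrite <- Nat.sub_1_r. field. lra.
Qed.

Lemma hill_f_continuous (x : R) : 0 <= x -> continuity_pt (fun y => f y) x.
Proof.
  intros hx. apply derivable_continuous_pt. exists (a * hill' n x - 1).
  apply is_derive_Reals, is_derive_hill_f, hx.
Qed.

Lemma hill_f_0 : f 0 = r.
Proof. unfold hill_f. rewrite pow_i by lia. field_simplify; lra. Qed.

Lemma hill_f_neg_large (x : R) : a + r < x -> f x < 0.
Proof.
  intros hx. pose proof (hill_lt_1 n x ltac:(lra)).
  unfold hill_f. fold (hill n x). nra.
Qed.

Lemma hill_f_nondecr (u v : R) : 0 <= u <= v ->
  (forall c, u < c < v -> 1 <= a * hill' n c) -> f u <= f v.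
Proof.
  intros huv hc.
  apply (derive_nonneg_le (fun y => f y) (fun c => a * hill' n c - 1)); [lra| |].
  - intros c hc'. apply is_derive_hill_f. lra.
  - intros c hc'. specialize (hc c hc'). lra.
Qed.

Variables x1 x2 : R.
Hypothesis equilibria : exactly_two_equilibria (hill_f r n) a x1 x2.

Lemma hill_f_pos_below (y : R) : 0 <= y < x1 -> 0 < f y.
Proof.
  destruct equilibria as [hx12 heq]. intros hy.
  destruct (Rlt_or_le 0 (f y)) as [|hle]; [assumption|exfalso].
  destruct (Rle_lt_or_eq_dec _ _ hle) as [hneg|hzero].
  - destruct (Ranalysis5.IVT_interv (fun z => - f z) 0 y) as [z [hz hfz]].
    + intros c hc. apply continuity_pt_opp, hill_f_continuous. lra.
    + destruct (Req_dec y 0) as [->|]; [rewrite hill_f_0 in hneg; lra|lra].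
    + rewrite hill_f_0. lra.
    + lra.
    + assert (hz0 : f z = 0) by lra. apply heq in hz0; lra.
  - apply heq in hzero; lra.
Qed.

Lemma hill_f_neg_above (y : R) : x2 < y -> f y < 0.
Proof.
  destruct equilibria as [hx12 heq]. intros hy.
  destruct (Rlt_or_le (f y) 0) as [|hge]; [assumption|exfalso].
  destruct (Rle_lt_or_eq_dec _ _ hge) as [hpos|hzero].
  - set (b := a + r + y + 1).
    destruct (Ranalysis5.IVT_interv (fun z => - f z) y b) as [z [hz hfz]].
    + intros c hc. apply continuity_pt_opp, hill_f_continuous. lra.
    + unfold b. lra.
    + lra.
    + pose proof (hill_f_neg_large b ltac:(unfold b; lra)). lra.
    + assert (hz0 : f z = 0) by lra. apply heq in hz0; lra.
  - symmetry in hzero. apply heq in hzero; lra.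
Qed.

Lemma lower_fold_below_inflection :
  a * hill' n x1 = 1 -> x1 <> inflection_point n -> x1 < inflection_point n.
Proof.
  destruct equilibria as [hx12 heq]. intros hfold hne.
  destruct (Rlt_or_le x1 (inflection_point n)) as [|hle]; [assumption|exfalso].
  pose proof (inflection_point_pos n).
  assert (f (inflection_point n) <= f x1).
  { apply hill_f_nondecr; [lra|]. intros c hc.
    pose proof (hill'_decr n n_ge2 c x1 ltac:(lra)). nra. }
  assert (f x1 = 0) by (apply heq; lra).
  pose proof (hill_f_pos_below (inflection_point n) ltac:(lra)). lra.
Qed.

Lemma upper_fold_above_inflection :
  a * hill' n x2 = 1 -> x2 <> inflection_point n -> inflection_point n < x2.
Proof.
  destruct equilibria as [hx12 heq]. intros hfold hne.
  destruct (Rlt_or_le (inflection_point n) x2) as [|hle]; [assumption|exfalso].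
  assert (f x2 <= f (inflection_point n)).
  { apply hill_f_nondecr; [lra|]. intros c hc.
    pose proof (hill'_incr n n_ge2 x2 c ltac:(lra) ltac:(lra)). nra. }
  assert (f x2 = 0) by (apply heq; lra).
  pose proof (hill_f_neg_above (inflection_point n) ltac:(lra)). lra.
Qed.

End Equilibria.

Section Folds.

Variable n : nat.
Hypothesis n_ge2 : (2 <= n)%nat.

Local Notation p := (inflection_point n).

Lemma tangent_offset_inj_below (x y : R) : 0 <= x < p -> 0 <= y < p ->
  tangent_offset n x = tangent_offset n y -> x = y.
Proof.
  intros hx hy he. destruct (Rtotal_order x y) as [hxy|[hxy|hxy]]; [exfalso| |exfalso].
  - pose proof (tangent_offset_incr n n_ge2 x y ltac:(lra) ltac:(lra)). lra.
  - assumption.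
  - pose proof (tangent_offset_incr n n_ge2 y x ltac:(lra) ltac:(lra)). lra.
Qed.

Lemma tangent_offset_inj_above (x y : R) : p < x -> p < y ->
  tangent_offset n x = tangent_offset n y -> x = y.
Proof.
  intros hx hy he. destruct (Rtotal_order x y) as [hxy|[hxy|hxy]]; [exfalso| |exfalso].
  - pose proof (tangent_offset_decr n n_ge2 x y ltac:(lra)). lra.
  - assumption.
  - pose proof (tangent_offset_decr n n_ge2 y x ltac:(lra)). lra.
Qed.

Lemma fold_ne_inflection (a t : R) :
  a * hill' n t = 1 -> a <> exceptional_a n -> t <> p.
Proof.
  intros hfold hexc ht. rewrite ht in hfold. apply hexc.
  pose proof (exceptional_a_hill' n n_ge2).
  pose proof (hill'_pos n n_ge2 p (inflection_point_pos n)).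
  apply (Rmult_eq_reg_r (hill' n p)); lra.
Qed.

Lemma fold_of_tangency (r a t : R) : 0 < t ->
  is_derive (fun y => hill_f r n y a) t 0 -> a * hill' n t = 1.
Proof.
  intros ht hd. apply is_derive_unique in hd.
  enough (a * hill' n t - 1 = 0) by lra.
  rewrite <- hd. symmetry. apply is_derive_unique, is_derive_hill_f. lra.
Qed.

Lemma tangent_offset_at_fold (r a t : R) : 0 <= t ->
  a * hill' n t = 1 -> hill_f r n t a = 0 -> tangent_offset n t = r.
Proof.
  intros ht hfold hzero. unfold hill_f in hzero. fold (hill n t) in hzero.
  rewrite (hill_eq n n_ge2 t ht), <- Rmult_assoc, hfold, Rmult_1_l in hzero.
  unfold tangent_offset. lra.
Qed.

Lemma fold_point (r a x1 x2 : R) : 0 < r -> 0 < a ->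
  tangency (hill_f r n) a -> exactly_two_equilibria (hill_f r n) a x1 x2 ->
  a <> exceptional_a n ->
  exists t, (t = x1 /\ t < p \/ t = x2 /\ p < t) /\
    a * hill' n t = 1 /\ tangent_offset n t = r.
Proof.
  intros hr ha [t [ht [hzero hd]]] heq hexc.
  pose proof (fold_of_tangency r a t ht hd) as hfold.
  pose proof (fold_ne_inflection a t hfold hexc) as hne.
  exists t. split; [|split; [assumption|apply (tangent_offset_at_fold r a); lra]].
  destruct (proj2 heq t ltac:(lra)) as [hsol _]. destruct (hsol hzero) as [->| ->].
  - left. split; [reflexivity|].
    apply (lower_fold_below_inflection n r a n_ge2 hr ha x1 x2); assumption.
  - right. split; [reflexivity|].
    apply (upper_fold_above_inflection n r a n_ge2 hr ha x1 x2); assumption.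
Qed.

Lemma fold_bifurcation_hill_f (r a t : R) : 0 < a -> 0 < t ->
  hill_f r n t a = 0 -> a * hill' n t = 1 -> a <> exceptional_a n ->
  fold_bifurcation (hill_f r n) t a.
Proof.
  intros ha ht hzero hfold hexc.
  pose proof (fold_ne_inflection a t hfold hexc) as hne.
  split; [assumption|split; [|split]].
  - replace 0 with (a * hill' n t - 1) by lra. apply is_derive_hill_f. lra.
  - exists (hill n t). split; [|apply Rgt_not_eq, hill_pos; assumption].
    unfold hill_f, hill. auto_derive; [exact I|ring].
  - exists (a * hill'' n t). split.
    + apply (is_derive_ext_loc (fun y => a * hill' n y - 1)).
      * apply (filter_imp (fun y => 0 < y)); [|apply open_gt; assumption].
        intros y hy. symmetry. apply is_derive_unique, is_derive_hill_f. lra.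
      * pose proof (is_derive_hill' n n_ge2 t ht) as hd.
        apply is_derive_Reals in hd. apply is_derive_Reals.
        replace (a * hill'' n t) with (a * hill'' n t - 0) by ring.
        apply (derivable_pt_lim_minus (fun y => a * hill' n y) (fun _ => 1)).
        -- apply derivable_pt_lim_scal, hd.
        -- apply derivable_pt_lim_const.
    + destruct (Rtotal_order t p) as [hlt|[heq|hgt]]; [|contradiction|].
      * pose proof (hill''_pos n n_ge2 t (conj ht hlt)). nra.
      * pose proof (hill''_neg n n_ge2 t hgt). nra.
Qed.

Lemma no_lower_fold_before_upper_fold (r a1 a2 x11 x12 x21 x22 : R) :
  0 < r -> 0 < a1 < a2 ->
  exactly_two_equilibria (hill_f r n) a1 x11 x12 ->
  exactly_two_equilibria (hill_f r n) a2 x21 x22 ->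
  a1 * hill' n x11 = 1 -> a2 * hill' n x22 = 1 -> x11 < p -> p < x22 -> False.
Proof.
  intros hr ha heq1 heq2 hfold1 hfold2 hx11 hx22.
  pose proof heq1 as [hx1 hsol1]. pose proof heq2 as [hx2 hsol2].
  assert (hpos : 0 < hill_f r n x12 a2).
  { assert (hill_f r n x12 a1 = 0) by (apply hsol1; lra).
    pose proof (hill_pos n x12 ltac:(lra)).
    unfold hill_f in *. fold (hill n x12) in *. nra. }
  assert (hle : x12 <= x22).
  { destruct (Rle_or_lt x12 x22) as [|hlt]; [assumption|exfalso].
    pose proof (hill_f_neg_above n r a2 hr ltac:(lra) x21 x22 heq2 x12 hlt). lra. }
  (* [hill' n] is unimodal, so [a2 * hill' n >= 1] on [[x11, x22]]: at [x11] because
     [a2 > a1], at [x22] by tangency. *)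
  assert (hill_f r n x12 a2 <= hill_f r n x22 a2).
  { apply hill_f_nondecr; [lra|]. intros c hc.
    destruct (Rle_or_lt c p) as [hcp|hcp].
    - pose proof (hill'_incr n n_ge2 x11 c ltac:(lra) hcp).
      pose proof (hill'_pos n n_ge2 x11 ltac:(lra)). nra.
    - pose proof (hill'_decr n n_ge2 c x22 ltac:(lra)). nra. }
  assert (hill_f r n x22 a2 = 0) by (apply hsol2; lra).
  lra.
Qed.

Lemma fold_points_upper_lower (r a1 a2 x11 x12 x21 x22 t1 t2 : R) :
  0 < r -> 0 < a1 < a2 ->
  exactly_two_equilibria (hill_f r n) a1 x11 x12 ->
  exactly_two_equilibria (hill_f r n) a2 x21 x22 ->
  t1 = x11 /\ t1 < p \/ t1 = x12 /\ p < t1 ->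
  t2 = x21 /\ t2 < p \/ t2 = x22 /\ p < t2 ->
  a1 * hill' n t1 = 1 -> a2 * hill' n t2 = 1 ->
  tangent_offset n t1 = r -> tangent_offset n t2 = r ->
  t1 = x12 /\ t2 = x21.
Proof.
  intros hr ha heq1 heq2 hside1 hside2 hfold1 hfold2 hoff1 hoff2.
  pose proof heq1 as [hx1 _]. pose proof heq2 as [hx2 _].
  assert (hdistinct : t1 <> t2).
  { intros <-. pose proof (hill'_pos n n_ge2 t1 ltac:(lra)). nra. }
  destruct hside1 as [[-> hlt1]|[-> hgt1]], hside2 as [[-> hlt2]|[-> hgt2]];
    try (split; reflexivity); exfalso.
  - apply hdistinct, tangent_offset_inj_below; lra.
  - apply (no_lower_fold_before_upper_fold r a1 a2 x11 x12 x21 x22); assumption.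
  - apply hdistinct, tangent_offset_inj_above; lra.
Qed.

End Folds.

Theorem proposition2 (r : R) (n : nat) (ac1 ac2 : R)
  (x11 x12 x21 x22 : R)
  (hr : 0 < r) (hn : (2 <= n)%nat)
  (hac : 0 < ac1 < ac2)
  (htan : forall a, 0 < a -> (tangency (hill_f r n) a <-> a = ac1 \/ a = ac2))
  (heq1 : exactly_two_equilibria (hill_f r n) ac1 x11 x12)
  (heq2 : exactly_two_equilibria (hill_f r n) ac2 x21 x22)
  (hne1 : ac1 <> exceptional_a n) (hne2 : ac2 <> exceptional_a n) :
  fold_bifurcation (hill_f r n) x12 ac1 /\ fold_bifurcation (hill_f r n) x21 ac2.
Proof.
  assert (ha1 : 0 < ac1) by lra. assert (ha2 : 0 < ac2) by lra.
  destruct (fold_point n hn r ac1 x11 x12 hr ha1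
              (proj2 (htan ac1 ha1) (or_introl eq_refl)) heq1 hne1)
    as (t1 & hside1 & hfold1 & hoff1).
  destruct (fold_point n hn r ac2 x21 x22 hr ha2
              (proj2 (htan ac2 ha2) (or_intror eq_refl)) heq2 hne2)
    as (t2 & hside2 & hfold2 & hoff2).
  destruct (fold_points_upper_lower n hn r ac1 ac2 x11 x12 x21 x22 t1 t2
              hr hac heq1 heq2 hside1 hside2 hfold1 hfold2 hoff1 hoff2) as [-> ->].
  destruct heq1 as [hx1 hsol1], heq2 as [hx2 hsol2].
  split; apply fold_bifurcation_hill_f; try assumption; try lra.
  - apply hsol1; lra.
  - apply hsol2; lra.
Qed.
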